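(* Let $\Gamma$ be a compact topological group, $A$ a locally compact space, and $\mathcal I$ a weakly locally maximal $(\Gamma,A)$-groupoid. Then: (i) there exists a split $\Gamma$-space $(Y_{\mathcal I},\varpi,\phi)$ over $A$ with isotropy groupoid $\mathcal I$, and $Y_{\mathcal I}$ is locally compact; (ii) if $(X,\pi,\varphi)$ and $(X',\pi',\varphi')$ are two split $\Gamma$-spaces over $A$ with isotropy groupoid $\mathcal I$ and $X$, $X'$ are locally compact, then there is a unique $\Gamma$-equivariant homeomorphism $F\colon X\to X'$ with $\varphi'=F\circ\varphi$.
   Context: A space is locally compact if it is Hausdorff and every point has a compact neighbourhood. A split $\Gamma$-space over $A$ is a triple $(X,\pi,\varphi)$ where $X$ carries a continuous left $\Gamma$-action, $\pi\colon X\to A$ is a continuous surjection each of whose fibres is a single $\Gamma$-orbit, and $\varphi\colon A\to X$ is a continuous section of $\pi$. A $(\Gamma,A)$-groupoid is a subspace $\mathcal I\subset\Gamma\times A$ such that for every $a\in A$, $\mathcal I_a:=\mathcal I\cap(\Gamma\times\{a\})=\tilde{\mathcal I}_a\times\{a\}$ with $\tilde{\mathcal I}_a$ a closed subgroup of $\Gamma$. It is weakly locally maximal if every $a\in A$ has a neighbourhood $U$ such that $\tilde{\mathcal I}_u\subset\tilde{\mathcal I}_a$ for all $u\in U$. The isotropy groupoid of $(X,\pi,\varphi)$ is $\{(\gamma,a)\in\Gamma\times A:\gamma\in\Gamma_{\varphi(a)}\}$, where $\Gamma_x$ is the stabiliser of $x$. *)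

From HB Require Import structures.
From mathcomp Require Import all_boot all_classical all_reals topology.
Set Implicit Arguments. Unset Strict Implicit. Unset Printing Implicit Defensive.
Local Open Scope classical_set_scope.

Record topGroup (G : topologicalType) := TopGroup {
  gmul : G -> G -> G;
  ginv : G -> G;
  gone : G;
  gmulA : forall x y z, gmul x (gmul y z) = gmul (gmul x y) z;
  gmul1g : forall x, gmul gone x = x;
  gmulg1 : forall x, gmul x gone = x;
  gmulVg : forall x, gmul (ginv x) x = gone;
  gmulgV : forall x, gmul x (ginv x) = gone;
  gmul_cont : continuous (fun p : G * G => gmul p.1 p.2);
  ginv_cont : continuous ginv }.

Definition loc_compact_space (T : topologicalType) : Prop :=
  hausdorff_space T /\ forall x : T, exists K : set T, nbhs x K /\ compact K.

Definition cont_left_action (G : topologicalType) (Gm : topGroup G)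
  (X : topologicalType) (act : G -> X -> X) : Prop :=
  (forall x, act (gone Gm) x = x) /\
  (forall g h x, act (gmul Gm g h) x = act g (act h x)) /\
  continuous (fun p : G * X => act p.1 p.2).

Definition split_space (G : topologicalType) (Gm : topGroup G)
  (A X : topologicalType) (act : G -> X -> X) (pi : X -> A) (phi : A -> X) : Prop :=
  cont_left_action Gm act /\
  continuous pi /\ (forall a : A, exists x : X, pi x = a) /\
  (forall x : X, pi @^-1` [set pi x] = [set act g x | g in [set: G]]) /\
  continuous phi /\ (forall a : A, pi (phi a) = a).

Definition closed_subgroup (G : topologicalType) (Gm : topGroup G) (S : set G) : Prop :=
  closed S /\ S (gone Gm) /\
  (forall x y, S x -> S y -> S (gmul Gm x y)) /\ (forall x, S x -> S (ginv Gm x)).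

Definition gfibre (G A : Type) (I : set (G * A)) (a : A) : set G := [set g | I (g, a)].

Definition GA_groupoid (G : topologicalType) (Gm : topGroup G) (A : topologicalType)
  (I : set (G * A)) : Prop :=
  forall a : A, closed_subgroup Gm (gfibre I a).

Definition weakly_locally_maximal (G A : topologicalType) (I : set (G * A)) : Prop :=
  forall a : A, exists U : set A, nbhs a U /\
    forall u, U u -> gfibre I u `<=` gfibre I a.

Definition isotropy_groupoid (G A X : Type) (act : G -> X -> X) (phi : A -> X)
  : set (G * A) := [set p | act p.1 (phi p.2) = phi p.2].

Definition homeomorphic_map (X Y : topologicalType) (F : X -> Y) : Prop :=
  continuous F /\ exists H : Y -> X, continuous H /\ cancel F H /\ cancel H F.

From mathcomp Require Import all_boot all_classical all_reals topology generic_quotient.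
Set Implicit Arguments. Unset Strict Implicit.
Local Open Scope classical_set_scope.

(* The model Y_I is the quotient of G x A by (g, a) ~ (g', a) iff g^-1 g' lies in
   I_a, with G acting by left multiplication on the first factor; its isotropy
   groupoid is I by construction.  Weak local maximality makes the sets
   {(g n k, b) : n in N, k in I_a, b in U}, with N open in G and U a small open
   neighbourhood of a, open and saturated.  Since I_a is closed, such sets separate
   points (Hausdorff); since I_a is compact, a tube-lemma argument makes the action
   continuous.
   Conversely, for any split G-space X over A with Hausdorff X and compact G, the
   orbit map (g, a) |-> g.phi(a) is a closed continuous surjection G x A -> X, so X
   carries the quotient topology of G x A by its isotropy groupoid.  Two split
   spaces with the same isotropy groupoid are therefore identified by
   g.phi(a) |-> g.phi'(a), which is well defined precisely because the isotropy
   groupoids agree. *)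

Lemma open_setX (X Y : topologicalType) (P : set X) (Q : set Y) :
  open P -> open Q -> open (P `*` Q).
Proof.
move=> oP oQ; rewrite openE => -[x y] [/= Px Qy].
exists (P, Q); first by split; apply: open_nbhs_nbhs.
by move=> [a b] [].
Qed.

Lemma closed_eqfun (T X : topologicalType) (f g : T -> X) :
  hausdorff_space X -> continuous f -> continuous g -> closed [set t | f t = g t].
Proof.
move=> hX cf cg t clt; apply: hX => U V nU nV.
have nUV : nbhs t (f @^-1` U `&` g @^-1` V) by apply: filterI; [exact: cf | exact: cg].
have [s [fg [Us Vs]]] := clt _ nUV.
by exists (f s); split => //; rewrite fg.
Qed.

Lemma closed_compact_proj (K T : topologicalType) (D : set (K * T)) :
  compact [set: K] -> closed D -> closed [set t | exists k, D (k, t)].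
Proof.
move=> cK cD t clt; apply: contrapT => nDt.
have : \forall t' \near t, [set: K] `<=` (fun k => ~ D (k, t')).
  apply: (iffLR (compact_near_coveringP _) cK) => k _.
  have : nbhs (k, t) (~` D).
    by apply: open_nbhs_nbhs; split; [rewrite openC | move=> Dk; apply: nDt; exists k].
  by move=> [[V W] [nV nW] VW]; exists (V, W) => // -[k' t'] [Vk Wt]; exact: (VW (k', t')).
by move=> /clt [t' [[k Dk] /(_ k I)]].
Qed.

Section TopGroup.
Variables (G : topologicalType) (Gm : topGroup G).
Local Notation mul := (gmul Gm).
Local Notation inv := (ginv Gm).
Local Notation one := (gone Gm).

Lemma gmulKV x y : mul (inv x) (mul x y) = y.
Proof. by rewrite gmulA gmulVg gmul1g. Qed.

Lemma gmulVK x y : mul x (mul (inv x) y) = y.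
Proof. by rewrite gmulA gmulgV gmul1g. Qed.

Lemma gmulK x y : mul (mul y x) (inv x) = y.
Proof. by rewrite -gmulA gmulgV gmulg1. Qed.

Lemma gmulVr x y : mul (mul y (inv x)) x = y.
Proof. by rewrite -gmulA gmulVg gmulg1. Qed.

Lemma ginv_uniq x y : mul x y = one -> inv x = y.
Proof. by move=> xy; rewrite -(gmulKV x y) xy gmulg1. Qed.

Lemma ginvK x : inv (inv x) = x.
Proof. by apply: ginv_uniq; rewrite gmulVg. Qed.

Lemma ginvM x y : inv (mul x y) = mul (inv y) (inv x).
Proof. by apply: ginv_uniq; rewrite -gmulA gmulVK gmulgV. Qed.

Lemma ginv1 : inv one = one.
Proof. by apply: ginv_uniq; rewrite gmul1g. Qed.

Lemma gmul_eq_sandwich g1 g2 n n' k k' :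
  mul (mul g1 n) k = mul (mul g2 n') k' ->
  mul (mul (inv n) (mul (inv g1) g2)) n' = mul k (inv k').
Proof.
move=> e; have -> : g2 = mul (mul (mul (mul g1 n) k) (inv k')) (inv n').
  by rewrite e !gmulK.
by rewrite !gmulA gmulVr -!gmulA !gmulKV.
Qed.

Lemma continuous_gmul (T : topologicalType) (f g : T -> G) :
  continuous f -> continuous g -> continuous (fun t => mul (f t) (g t)).
Proof.
move=> cf cg t.
apply: (@continuous_comp _ _ _ (fun t => (f t, g t)) (fun p : G * G => mul p.1 p.2)).
  exact: cvg_pair (cf t) (cg t).
exact: gmul_cont.
Qed.

Lemma continuous_ginv (T : topologicalType) (f : T -> G) :
  continuous f -> continuous (fun t => inv (f t)).
Proof. by move=> cf t; apply: continuous_comp; [exact: cf | exact: ginv_cont]. Qed.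

Definition mulset (g : G) (N H : set G) : set G :=
  [set z | exists n k, [/\ N n, H k & z = mul (mul g n) k]].

Lemma open_mulset g N H : open N -> open (mulset g N H).
Proof.
move=> oN; rewrite openE => _ [n [k [Nn Hk ->]]].
pose f z := mul (mul (inv g) z) (inv k).
have fc : continuous f.
  apply: continuous_gmul; last by move=> ?; exact: cvg_cst.
  by apply: continuous_gmul; [move=> ?; exact: cvg_cst | move=> ?; exact: cvg_id].
have nf : nbhs (mul (mul g n) k) (f @^-1` N).
  by apply: fc; rewrite /f gmulA gmulKV gmulK; apply: open_nbhs_nbhs.
rewrite /interior /=; apply: (filterS _ nf) => z /= Nz; exists (f z), k; split => //.
by rewrite /f gmulA gmulVK gmulVr.
Qed.

Lemma nbhs1_sandwich_avoid (H : set G) x : closed H -> ~ H x ->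
  exists2 N, open N /\ N one & forall n n', N n -> N n' -> ~ H (mul (mul (inv n) x) n').
Proof.
move=> cH nHx; pose f (q : G * G) := mul (mul (inv q.1) x) q.2.
have fc : continuous f.
  apply: continuous_gmul; last by move=> ?; exact: cvg_snd.
  apply: continuous_gmul; last by move=> ?; exact: cvg_cst.
  by apply: continuous_ginv => ?; exact: cvg_fst.
have : nbhs (f (one, one)) (~` H).
  by rewrite /f ginv1 gmul1g gmulg1; apply: open_nbhs_nbhs; split => //; rewrite openC.
move=> /fc [[V1 V2] [nV1 nV2] VH].
exists (V1 `&` V2)°; first by split; [exact: open_interior | exact: filterI].
move=> n n' /interior_subset [Vn _] /interior_subset [_ Vn'].
exact: (VH (n, n')).
Qed.

Lemma near_compact_translate (T : topologicalType) (H : set G) (O : set (G * T)) g t :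
  compact H -> open O -> (forall h, H h -> O (mul g h, t)) ->
  \forall q \near (g, t), forall h, H h -> O (mul q.1 h, q.2).
Proof.
move=> cH oO gHO.
apply: (iffLR (compact_near_coveringP H) cH _ (nbhs (g, t))
  (fun q h => O (mul q.1 h, q.2))) => // h Hh.
have psic : continuous (fun r : G * (G * T) => (mul r.2.1 r.1, r.2.2)).
  move=> r; apply: cvg_pair; last exact: (cvg_comp _ _ cvg_snd cvg_snd).
  apply: continuous_gmul r; last by move=> ?; exact: cvg_fst.
  by move=> ?; exact: (cvg_comp _ _ cvg_snd cvg_fst).
have : nbhs (mul g h, t) O by apply: open_nbhs_nbhs; split => //; exact: gHO.
move=> /(psic (h, (g, t))) [[V W] [nV nW] VW].
by exists (V, W) => // -[h' q] [Vh Wq]; exact: (VW (h', q)).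
Qed.

End TopGroup.

Section SplitSpace.
Variables (G : topologicalType) (Gm : topGroup G) (A X : topologicalType).
Variables (act : G -> X -> X) (pi : X -> A) (phi : A -> X).
Hypothesis split : split_space Gm act pi phi.

Let orbit_map (p : G * A) : X := act p.1 (phi p.2).

Lemma split_pi_act g x : pi (act g x) = pi x.
Proof.
have [_ [_ [_ [fib _]]]] := split.
by have : (pi @^-1` [set pi x]) (act g x) by rewrite fib; exists g.
Qed.

Lemma split_pi_orbit g a : pi (act g (phi a)) = a.
Proof. by rewrite split_pi_act; case: split => _ [_ [_ [_ [_]]]]. Qed.

Lemma split_orbit_section x : exists g, x = act g (phi (pi x)).
Proof.
have [[act1 [actM _]] [_ [_ [fib [_ piphi]]]]] := split.
have : (pi @^-1` [set pi x]) (phi (pi x)) by rewrite /= piphi.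
rewrite fib => -[h _ hx]; exists (ginv Gm h).
by rewrite -hx -actM gmulVg act1.
Qed.

Lemma continuous_orbit_map : continuous orbit_map.
Proof.
have [[_ [_ actc]] [_ [_ [_ [phic _]]]]] := split.
move=> p; apply: (@continuous_comp _ _ _ (fun p : G * A => (p.1, phi p.2))
  (fun q : G * X => act q.1 q.2)); last exact: actc.
apply: cvg_pair; first exact: cvg_fst.
by apply: (cvg_comp _ _ cvg_snd); exact: phic.
Qed.

Lemma closed_orbit_map (C : set (G * A)) : compact [set: G] -> hausdorff_space X ->
  closed C -> closed (orbit_map @` C).
Proof.
move=> cG hX cC; have [_ [pic _]] := split.
(* The image is the projection, along the compact factor, of a closed subset of G x X. *)
have -> : orbit_map @` C =
    [set x | exists g, C (g, pi x) /\ orbit_map (g, pi x) = x].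
  apply/seteqP; split => x.
    by move=> [[g a] Cga <-]; exists g; rewrite /orbit_map /= split_pi_orbit.
  by move=> [g [Cg <-]]; exists (g, pi x).
pose proj (q : G * X) := (q.1, pi q.2).
have projc : continuous proj.
  by move=> q; apply: cvg_pair; [exact: cvg_fst | apply: (cvg_comp _ _ cvg_snd); exact: pic].
apply: (@closed_compact_proj _ _ (proj @^-1` C `&` [set q | orbit_map (proj q) = q.2]) cG).
apply: closedI.
  by move/continuous_closedP : projc; apply.
apply: closed_eqfun => // q; last exact: cvg_snd.
by apply: continuous_comp; [exact: projc | exact: continuous_orbit_map].
Qed.

Lemma continuous_through_orbit_map (Z : topologicalType) (f : X -> Z) :
  compact [set: G] -> hausdorff_space X ->
  continuous (f \o orbit_map) -> continuous f.
Proof.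
move=> cG hX cf; apply/continuous_closedP => D cD.
have -> : f @^-1` D = orbit_map @` ((f \o orbit_map) @^-1` D).
  apply/seteqP; split => x; last by move=> [p Dp <-].
  move=> Dx; have [g eg] := split_orbit_section x.
  by exists (g, pi x); rewrite /= /orbit_map -eg.
by apply: closed_orbit_map => //; move/continuous_closedP : cf; apply.
Qed.

End SplitSpace.

Section SplitTransport.
Variables (G : topologicalType) (Gm : topGroup G) (A X X' : topologicalType).
Variables (act : G -> X -> X) (pi : X -> A) (phi : A -> X).
Variables (act' : G -> X' -> X') (pi' : X' -> A) (phi' : A -> X').
Hypotheses (split : split_space Gm act pi phi) (split' : split_space Gm act' pi' phi').
Hypothesis same_isotropy : isotropy_groupoid act phi = isotropy_groupoid act' phi'.

Lemma isotropy_transfer g h a :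
  act g (phi a) = act h (phi a) -> act' g (phi' a) = act' h (phi' a).
Proof.
have [[act1 [actM _]] _] := split; have [[_ [actM' _]] _] := split'.
move=> gh; have : isotropy_groupoid act phi (gmul Gm (ginv Gm h) g, a).
  by rewrite /isotropy_groupoid /= actM gh -actM gmulVg act1.
by rewrite same_isotropy /isotropy_groupoid /= => e; rewrite -[in RHS]e -actM' gmulVK.
Qed.

(* The choice made by [cid] is irrelevant by [isotropy_transfer]. *)
Definition split_transport (x : X) : X' :=
  act' (sval (cid (split_orbit_section split x))) (phi' (pi x)).

Lemma split_transport_orbit g a : split_transport (act g (phi a)) = act' g (phi' a).
Proof.
rewrite /split_transport; case: cid => /= k; rewrite (split_pi_orbit split) => e.
exact: isotropy_transfer (esym e).
Qed.

End SplitTransport.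

Theorem split_space_uniq (G : topologicalType) (Gm : topGroup G) (A X X' : topologicalType)
  (act : G -> X -> X) (act' : G -> X' -> X') (pi : X -> A) (pi' : X' -> A)
  (phi : A -> X) (phi' : A -> X') :
  compact [set: G] -> hausdorff_space X -> hausdorff_space X' ->
  split_space Gm act pi phi -> split_space Gm act' pi' phi' ->
  isotropy_groupoid act phi = isotropy_groupoid act' phi' ->
  exists! F : X -> X',
    (forall g x, F (act g x) = act' g (F x)) /\ homeomorphic_map F /\ phi' = F \o phi.
Proof.
move=> cG hX hX' split split' iso.
have FE := split_transport_orbit split split' iso.
have HE := split_transport_orbit split' split (esym iso).
have [[act1 [actM _]] _] := split; have [[act1' [actM' _]] _] := split'.
exists (split_transport act' phi' split); split; last first.
  move=> F [Fact [_ Fphi]]; apply: funext => x.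
  by have [g ->] := split_orbit_section split x; rewrite FE Fact Fphi.
split.
  by move=> k x; have [g ->] := split_orbit_section split x; rewrite -actM !FE actM'.
split; last by apply: funext => a /=; rewrite -[phi a]act1 FE act1'.
split.
  apply: (continuous_through_orbit_map split cG hX).
  rewrite (_ : _ \o _ = fun p => act' p.1 (phi' p.2)); first exact: continuous_orbit_map split'.
  by apply: funext => p /=; rewrite FE.
exists (split_transport act phi split'); split.
  apply: (continuous_through_orbit_map split' cG hX').
  rewrite (_ : _ \o _ = fun p => act p.1 (phi p.2)); first exact: continuous_orbit_map split.
  by apply: funext => p /=; rewrite HE.
split => x.
  by have [g ->] := split_orbit_section split x; rewrite FE HE.
by have [g ->] := split_orbit_section split' x; rewrite HE FE.
Qed.

Section GroupoidQuotient.
Variables (G A : topologicalType) (Gm : topGroup G) (I : set (G * A)).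
Hypothesis groupoid : GA_groupoid Gm I.
Local Notation mul := (gmul Gm).
Local Notation inv := (ginv Gm).
Local Notation one := (gone Gm).

Lemma groupoid1 a : I (one, a).
Proof. by have [_ []] := groupoid a. Qed.

Lemma groupoidM a x y : I (x, a) -> I (y, a) -> I (mul x y, a).
Proof. by have [_ [_ [IM _]]] := groupoid a; exact: IM. Qed.

Lemma groupoidV a x : I (x, a) -> I (inv x, a).
Proof. by have [_ [_ [_ IV]]] := groupoid a; exact: IV. Qed.

Definition groupoid_rel (p q : G * A) : bool :=
  `[< p.2 = q.2 /\ I (mul (inv p.1) q.1, p.2) >].

Lemma groupoid_rel_refl : reflexive groupoid_rel.
Proof. by move=> p; apply/asboolP; split => //; rewrite gmulVg; exact: groupoid1. Qed.

Lemma groupoid_rel_sym : symmetric groupoid_rel.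
Proof.
suff flip p q : groupoid_rel p q -> groupoid_rel q p.
  by move=> p q; apply/idP/idP; exact: flip.
move=> /asboolP [e pq]; apply/asboolP; split => //.
by rewrite -e -[mul _ _](ginvK Gm) ginvM ginvK; exact: groupoidV.
Qed.

Lemma groupoid_rel_trans : transitive groupoid_rel.
Proof.
move=> q p r /asboolP [e1 pq] /asboolP [e2 qr]; apply/asboolP; split; first by rewrite e1.
rewrite -e1 in qr; have := groupoidM pq qr.
by rewrite -gmulA gmulVK.
Qed.

Definition groupoid_equiv : equiv_rel (G * A) :=
  EquivRel groupoid_rel groupoid_rel_refl groupoid_rel_sym groupoid_rel_trans.

Definition Yspace : topologicalType := quotient_topology {eq_quot groupoid_equiv}%qT.

Definition ypi (p : G * A) : Yspace := (\pi_Yspace p)%qT.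

Lemma ypi_repr (y : Yspace) : ypi (repr y) = y.
Proof. exact: reprK. Qed.

Lemma ypiP p q : ypi p = ypi q <-> p.2 = q.2 /\ I (mul (inv p.1) q.1, p.2).
Proof.
split; first by move=> /(@eqmodP _ groupoid_equiv) /asboolP.
by move=> pq; apply/(@eqmodP _ groupoid_equiv); apply/asboolP.
Qed.

Lemma continuous_ypi : continuous ypi.
Proof. exact: pi_continuous. Qed.

Lemma open_ysaturated (S : set (G * A)) :
  (forall p q, S p -> ypi p = ypi q -> S q) -> open S -> open [set y : Yspace | S (repr y)].
Proof.
move=> satS oS; rewrite /open /= /quotient_open.
rewrite (_ : _ @^-1` _ = S) //; apply/seteqP; split => p /= Sp; apply: (satS _ _ Sp).
  by rewrite -[RHS]ypi_repr.
by rewrite -[LHS]ypi_repr.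
Qed.

Definition yact (g : G) (y : Yspace) : Yspace := ypi (mul g (repr y).1, (repr y).2).
Definition yvarpi (y : Yspace) : A := (repr y).2.
Definition yphi (a : A) : Yspace := ypi (one, a).

Lemma yact_ypi g p : yact g (ypi p) = ypi (mul g p.1, p.2).
Proof.
have /ypiP [e pr] : ypi p = ypi (repr (ypi p)) by rewrite ypi_repr.
apply/ypiP; rewrite /= -e; split => //.
by rewrite ginvM -gmulA gmulKV -[mul _ _](ginvK Gm) ginvM ginvK; exact: groupoidV.
Qed.

Lemma yvarpi_ypi p : yvarpi (ypi p) = p.2.
Proof. by have /ypiP [e _] : ypi p = ypi (repr (ypi p)) by rewrite ypi_repr. Qed.

Lemma yact1 y : yact one y = y.
Proof. by rewrite /yact gmul1g -surjective_pairing ypi_repr. Qed.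

Lemma yactM g k y : yact (mul g k) y = yact g (yact k y).
Proof. by rewrite [yact k y]/yact yact_ypi /= gmulA. Qed.

Lemma continuous_yvarpi : continuous yvarpi.
Proof.
apply/quotient_continuous; rewrite (_ : _ \o _ = snd); first by move=> ?; exact: cvg_snd.
by apply: funext => p /=; exact: yvarpi_ypi.
Qed.

Lemma continuous_yphi : continuous yphi.
Proof.
move=> a; apply: (@continuous_comp _ _ _ (fun a => (one, a)) ypi); last exact: continuous_ypi.
by apply: cvg_pair; [exact: cvg_cst | exact: cvg_id].
Qed.

Lemma yvarpi_fibre y : yvarpi @^-1` [set yvarpi y] = [set yact g y | g in [set: G]].
Proof.
apply/seteqP; split => y' /=; last by move=> [g _ <-]; rewrite /yact yvarpi_ypi.
move=> e; exists (mul (repr y').1 (inv (repr y).1)) => //.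
by rewrite /yact gmulVr; move: e; rewrite /yvarpi => <-; rewrite -surjective_pairing ypi_repr.
Qed.

Lemma isotropy_Y : isotropy_groupoid yact yphi = I.
Proof.
apply/funext => -[g a]; apply/propext; rewrite /isotropy_groupoid /yphi /= yact_ypi /= gmulg1.
split => [/ypiP [_] /=|Iga]; last by apply/ypiP; split => //=; rewrite gmulg1; exact: groupoidV.
by rewrite gmulg1 => /groupoidV; rewrite ginvK.
Qed.

Definition ytube a g N U : set (G * A) := mulset Gm g N (gfibre I a) `*` U.

Lemma nbhs_ytube a g N U p : (forall u, U u -> gfibre I u `<=` gfibre I a) ->
  open N -> open U -> ytube a g N U p -> nbhs (ypi p) [set y | ytube a g N U (repr y)].
Proof.
move=> UI oN oU Tp.
have satT q r : ytube a g N U q -> ypi q = ypi r -> ytube a g N U r.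
  move=> [[n [k [Nn Ik eq]]] Uq] /ypiP [eqr Iqr]; split; last by rewrite -eqr.
  exists n, (mul k (mul (inv q.1) r.1)); split => //; last by rewrite gmulA -eq gmulVK.
  by apply: groupoidM => //; exact: (UI q.2).
apply: open_nbhs_nbhs; split.
  by apply: open_ysaturated => //; apply: open_setX => //; exact: open_mulset.
by apply: (satT _ _ Tp); rewrite ypi_repr.
Qed.

Lemma continuous_yact : compact [set: G] -> weakly_locally_maximal I ->
  continuous (fun q : G * Yspace => yact q.1 q.2).
Proof.
move=> cG wlm [k0 y0]; rewrite -(ypi_repr y0); case: (repr y0) => g0 a0 O nO.
have {}nO : nbhs (ypi (mul k0 g0, a0)) O by rewrite -(yact_ypi k0 (g0, a0)).
have [cH _] := groupoid a0.
have oO : open (ypi @^-1` O°).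
  by move/continuousP : continuous_ypi; apply; exact: open_interior.
have HO h : gfibre I a0 h -> (ypi @^-1` O°) (mul (mul k0 g0) h, a0).
  move=> Ih; rewrite /= (_ : ypi _ = ypi (mul k0 g0, a0)) //.
  by apply/ypiP; split => //=; rewrite ginvM -gmulA gmulVg gmulg1; exact: groupoidV.
have := near_compact_translate (subclosed_compact cH cG (@subsetT _ _)) oO HO.
have psic : continuous (fun r : G * (G * A) => (mul r.1 r.2.1, r.2.2)).
  move=> r; apply: cvg_pair; last exact: (cvg_comp _ _ cvg_snd cvg_snd).
  apply: continuous_gmul r; first by move=> ?; exact: cvg_fst.
  by move=> ?; exact: (cvg_comp _ _ cvg_snd cvg_fst).
move=> /(psic (k0, (g0, a0))) [[V M'] [nV [[M U] [nM nU] MU]] sub].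
have [U1 [nU1 U1I]] := wlm a0.
pose U' := (U `&` U1)°.
have U'I u : U' u -> gfibre I u `<=` gfibre I a0 by move=> /interior_subset [_ /U1I].
have T0 : ytube a0 one M° U' (g0, a0).
  split; last exact: filterI.
  by exists g0, one; split => //; [exact: groupoid1 | rewrite gmul1g gmulg1].
exists (V, [set y | ytube a0 one M° U' (repr y)]).
  by split => //; apply: (nbhs_ytube U'I _ _ T0); exact: open_interior.
move=> [k y] [/= Vk [[n [j [Mn Ij ey]]] /interior_subset [Uy _]]].
have := sub (k, (n, (repr y).2)) (conj Vk (MU (n, (repr y).2) (conj (interior_subset Mn) Uy))) j Ij.
by rewrite /= /yact ey gmul1g gmulA => /interior_subset.
Qed.
Lemma hausdorff_Y : weakly_locally_maximal I -> hausdorff_space A -> hausdorff_space Yspace.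
Proof.
move=> wlm hA y1 y2; rewrite -(ypi_repr y1) -(ypi_repr y2).
case: (repr y1) (repr y2) => [g1 a1] [g2 a2] cl.
have a12 : a1 = a2.
  apply: hA => N1 N2 nN1 nN2.
  have W1 : nbhs (ypi (g1, a1)) (yvarpi @^-1` N1).
    by apply: continuous_yvarpi; rewrite yvarpi_ypi.
  have W2 : nbhs (ypi (g2, a2)) (yvarpi @^-1` N2).
    by apply: continuous_yvarpi; rewrite yvarpi_ypi.
  have [y [N1y N2y]] := cl _ _ W1 W2.
  by exists (yvarpi y).
subst a2; apply/ypiP; split => //=; apply: contrapT => nI.
have [cH _] := groupoid a1.
have [N [oN N1] NI] := nbhs1_sandwich_avoid Gm cH nI.
have [U [nU UI]] := wlm a1.
have U'I u : U° u -> gfibre I u `<=` gfibre I a1 by move=> /interior_subset /UI.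
have nT g : nbhs (ypi (g, a1)) [set y | ytube a1 g N U° (repr y)].
  apply: (nbhs_ytube U'I oN (@open_interior _ U)); split => //.
  by exists one, one; split => //; [exact: groupoid1 | rewrite !gmulg1].
have [y [[[n [k [Nn Ik e1]]] _] [[n' [k' [Nn' Ik' e2]]] _]]] := cl _ _ (nT g1) (nT g2).
apply: (NI n n' Nn Nn'); rewrite (gmul_eq_sandwich (etrans (esym e1) e2)).
by apply: groupoidM => //; exact: groupoidV.
Qed.

Lemma loc_compact_Y : weakly_locally_maximal I -> compact [set: G] ->
  loc_compact_space A -> loc_compact_space Yspace.
Proof.
move=> wlm cG [hA lcA]; split; first exact: hausdorff_Y.
move=> y; have [K [nK cK]] := lcA (repr y).2.
exists (ypi @` ([set: G] `*` K)); split; last first.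
  apply: continuous_compact; last exact: compact_setX.
  by apply: continuous_subspaceT; exact: continuous_ypi.
have : nbhs y [set y' | ([set: G] `*` K°) (repr y')].
  apply: open_nbhs_nbhs; split => //.
  apply: open_ysaturated; last by apply: open_setX; [exact: openT | exact: open_interior].
  by move=> p q [_ Kp] /ypiP [e _]; split => //; rewrite -e.
apply: filterS => y' [_ Ky']; exists (repr y'); last exact: ypi_repr.
by split => //; exact: interior_subset.
Qed.

Lemma split_space_Y : compact [set: G] -> weakly_locally_maximal I ->
  split_space Gm yact yvarpi yphi.
Proof.
move=> cG wlm; split; first by split; [exact: yact1 | split; [exact: yactM | exact: continuous_yact]].
split; first exact: continuous_yvarpi.
split; first by move=> a; exists (yphi a); rewrite yvarpi_ypi.
split; first exact: yvarpi_fibre.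
by split; [exact: continuous_yphi | move=> a; rewrite yvarpi_ypi].
Qed.

End GroupoidQuotient.

Unset Implicit Arguments.

Theorem proposition2p1 (G : topologicalType) (Gm : topGroup G)
  (A : topologicalType) (I : set (G * A)%type) :
  compact [set: G] -> loc_compact_space A ->
  GA_groupoid Gm I -> weakly_locally_maximal I ->
  (exists (Y : topologicalType) (act : G -> Y -> Y) (varpi : Y -> A) (phi : A -> Y),
      split_space Gm act varpi phi /\ isotropy_groupoid act phi = I /\
      loc_compact_space Y) /\
  (forall (X X' : topologicalType) (act : G -> X -> X) (act' : G -> X' -> X')
     (pi : X -> A) (pi' : X' -> A) (phi : A -> X) (phi' : A -> X'),
     split_space Gm act pi phi -> isotropy_groupoid act phi = I ->
     split_space Gm act' pi' phi' -> isotropy_groupoid act' phi' = I ->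
     loc_compact_space X -> loc_compact_space X' ->
     exists! F : X -> X',
       (forall g x, F (act g x) = act' g (F x)) /\ homeomorphic_map F /\
       phi' = F \o phi).
Proof.
move=> cG lcA groupoid wlm; split.
  exists (Yspace groupoid), (@yact _ _ _ _ groupoid), (@yvarpi _ _ _ _ groupoid), (yphi groupoid).
  split; first exact: split_space_Y.
  by split; [exact: isotropy_Y | exact: loc_compact_Y].
move=> X X' act act' pi pi' phi phi' split iso split' iso' [hX _] [hX' _].
by apply: (split_space_uniq cG hX hX' split split'); rewrite iso iso'.
Qed.
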